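(* Let $\mathcal C,\mathcal D$ be parsummable categories and $F\colon\mathcal C\to\mathcal D$ a functor of underlying categories that preserves sums. Then $F_*\mathcal C$ (described below) is a well-defined parsummable category.
   Context: Let $\omega=\{1,2,\dots\}$, $\mathcal M$ the monoid of injections $\omega\to\omega$, $E\mathcal M$ the category with objects $\mathcal M$ and unique morphisms between any two objects. An $E\mathcal M$-category is a small category with a strict $E\mathcal M$-action ($u_*$ the action of $u$, $[v,u]\colon u_*\Rightarrow v_*$, $u^X_\circ=[u,1]_X$). Such an action is uniquely determined by an $\mathcal M$-action on objects together with isomorphisms $u^X_\circ\colon X\to u_*X$ satisfying $(uv)^X_\circ=u^{v_*X}_\circ v^X_\circ$. $\mathrm{supp}(X)$ is the intersection of the finite $A\subset\omega$ such that $u_*X=X$ for all $u$ fixing $A$ pointwise; tame means all supports finite. A parsummable category is a tame $E\mathcal M$-category with an object $0$ of empty support and a functor $+$ on the full subcategory $\mathcal C\boxtimes\mathcal C\subset\mathcal C\times\mathcal C$ of disjointly supported pairs, strictly unital, associative, commutative and $E\mathcal M$-equivariant ($u_*(X+Y)=u_*X+u_*Y$, $u^{X+Y}_\circ=u^X_\circ+u^Y_\circ$). A functor $F\colon\mathcal C\to\mathcal D$ of underlying categories preserves sums if $F(0)=0$, $F\times F$ maps $\mathcal C\boxtimes\mathcal C$ into $\mathcal D\boxtimes\mathcal D$, and $F(X+Y)=F(X)+F(Y)$, $F(f+g)=F(f)+F(g)$ for all summable objects and morphisms. $F_*\mathcal C$: objects are the objects of $\mathcal C$; $\mathrm{Hom}_{F_*\mathcal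 C}(X,Y)=\mathrm{Hom}_{\mathcal D}(FX,FY)$ with composition in $\mathcal D$; the $\mathcal M$-action on objects is that of $\mathcal C$, and $u^X_\circ$ is $F(u^X_\circ)\colon F(X)\to F(u_*X)$; the sum of objects is the sum in $\mathcal C$ (with unit $0$), and the sum of morphisms is the sum in $\mathcal D$. *)

From Stdlib Require Import List.

(* The monoid M of injections omega -> omega.  We model omega = {1,2,...}
   by nat via the order-preserving bijection n |-> n+1 (pure relabelling). *)
Definition Minj : Type := { u : nat -> nat | forall a b, u a = u b -> a = b }.
Definition mfun (u : Minj) : nat -> nat := proj1_sig u.
Definition mid : Minj := exist _ (fun n => n) (fun a b h => h).
Definition mcomp (u v : Minj) : Minj :=
  exist (fun w : nat -> nat => forall a b, w a = w b -> a = b)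
        (fun n => mfun u (mfun v n))
        (fun a b h => proj2_sig v a b (proj2_sig u _ _ h)).

Record Cat := {
  Ob : Type;
  Hom : Ob -> Ob -> Type;
  idm : forall X, Hom X X;
  comp : forall X Y Z, Hom Y Z -> Hom X Y -> Hom X Z;
  comp_idl : forall X Y (f : Hom X Y), comp X Y Y (idm Y) f = f;
  comp_idr : forall X Y (f : Hom X Y), comp X X Y f (idm X) = f;
  comp_assoc : forall X Y Z W (f : Hom X Y) (g : Hom Y Z) (h : Hom Z W),
      comp X Z W h (comp X Y Z g f) = comp X Y W (comp Y Z W h g) f
}.
Arguments Hom {c} _ _.
Arguments idm {c} _.
Arguments comp {c X Y Z} _ _.

(* Equality of arrows is equality in this set; it is used to compare
   morphisms whose (source, target) are only propositionally equal. *)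
Definition Arr (C : Cat) : Type := { p : Ob C * Ob C & Hom (fst p) (snd p) }.
Definition arr {C : Cat} {X Y : Ob C} (f : Hom X Y) : Arr C :=
  existT (fun p : Ob C * Ob C => Hom (fst p) (snd p)) (X, Y) f.

Definition is_iso {C : Cat} {X Y : Ob C} (f : Hom X Y) : Prop :=
  exists g : Hom Y X, comp g f = idm X /\ comp f g = idm Y.

Record Functor (C D : Cat) := {
  fob : Ob C -> Ob D;
  fmor : forall X Y, @Hom C X Y -> @Hom D (fob X) (fob Y);
  fmor_id : forall X, fmor X X (idm X) = idm (fob X);
  fmor_comp : forall X Y Z (f : @Hom C X Y) (g : @Hom C Y Z),
      fmor X Z (comp g f) = comp (fmor Y Z g) (fmor X Y f)
}.
Arguments fob {C D} _ _.
Arguments fmor {C D} _ {X Y} _.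

(* E M-categories, in the form: M-action on objects + isomorphisms
   u_o^X : X -> u_* X with (uv)_o^X = u_o^{v_* X} o v_o^X. *)
Record EMdata (C : Cat) := {
  act : Minj -> Ob C -> Ob C;
  circ : forall u X, @Hom C X (act u X)
}.
Arguments act {C} _ _ _.
Arguments circ {C} _ _ _.

Definition is_EMcat {C : Cat} (E : EMdata C) : Prop :=
  (forall X, act E mid X = X) /\
  (forall u v X, act E (mcomp u v) X = act E u (act E v X)) /\
  (forall u X, is_iso (circ E u X)) /\
  (forall u v X, arr (circ E (mcomp u v) X)
                 = arr (comp (circ E u (act E v X)) (circ E v X))).

(* Supports.  A finite subset of omega is given by a list. *)
Definition supported_on {C : Cat} (E : EMdata C) (X : Ob C) (A : list nat) : Prop :=
  forall u : Minj, (forall a, In a A -> mfun u a = a) -> act E u X = X.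

Definition supp {C : Cat} (E : EMdata C) (X : Ob C) (n : nat) : Prop :=
  forall A : list nat, supported_on E X A -> In n A.

Definition finite_set (P : nat -> Prop) : Prop :=
  exists s : list nat, forall n, P n -> In n s.

Definition tame {C : Cat} (E : EMdata C) : Prop :=
  forall X, finite_set (supp E X).

Definition disj {C : Cat} (E : EMdata C) (X Y : Ob C) : Prop :=
  forall n, supp E X n -> supp E Y n -> False.

Record PSdata {C : Cat} (E : EMdata C) := {
  zero : Ob C;
  sumo : forall X Y, disj E X Y -> Ob C;
  summ : forall X X' Y Y' (H : disj E X Y) (H' : disj E X' Y'),
      @Hom C X X' -> @Hom C Y Y' -> @Hom C (sumo X Y H) (sumo X' Y' H')
}.
Arguments zero {C E} _.
Arguments sumo {C E} _ {X Y} _.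
Arguments summ {C E} _ {X X' Y Y'} _ _ _ _.

Definition is_parsummable {C : Cat} {E : EMdata C} (P : PSdata E) : Prop :=
  is_EMcat E /\ tame E /\
  (forall n, ~ supp E (zero P) n) /\
  (forall X Y (H : disj E X Y), summ P H H (idm X) (idm Y) = idm (sumo P H)) /\
  (forall X X' X'' Y Y' Y'' (H : disj E X Y) (H' : disj E X' Y') (H'' : disj E X'' Y'')
          (f : Hom X X') (f' : Hom X' X'') (g : Hom Y Y') (g' : Hom Y' Y''),
      summ P H H'' (comp f' f) (comp g' g) = comp (summ P H' H'' f' g') (summ P H H' f g)) /\
  (forall X (H : disj E X (zero P)), sumo P H = X) /\
  (forall X (H : disj E (zero P) X), sumo P H = X) /\
  (forall X X' (H : disj E X (zero P)) (H' : disj E X' (zero P)) (f : Hom X X'),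
      arr (summ P H H' f (idm (zero P))) = arr f) /\
  (forall X X' (H : disj E (zero P) X) (H' : disj E (zero P) X') (f : Hom X X'),
      arr (summ P H H' (idm (zero P)) f) = arr f) /\
  (forall X Y Z (Hxy : disj E X Y) (Hyz : disj E Y Z) (Hxz : disj E X Z)
          (H1 : disj E (sumo P Hxy) Z) (H2 : disj E X (sumo P Hyz)),
      sumo P H1 = sumo P H2) /\
  (forall X Y Z X' Y' Z'
          (Hxy : disj E X Y) (Hyz : disj E Y Z) (Hxz : disj E X Z)
          (H1 : disj E (sumo P Hxy) Z) (H2 : disj E X (sumo P Hyz))
          (Hxy' : disj E X' Y') (Hyz' : disj E Y' Z') (Hxz' : disj E X' Z')
          (H1' : disj E (sumo P Hxy') Z') (H2' : disj E X' (sumo P Hyz'))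
          (f : Hom X X') (g : Hom Y Y') (h : Hom Z Z'),
      arr (summ P H1 H1' (summ P Hxy Hxy' f g) h)
      = arr (summ P H2 H2' f (summ P Hyz Hyz' g h))) /\
  (forall X Y (H : disj E X Y) (Hs : disj E Y X), sumo P H = sumo P Hs) /\
  (forall X Y X' Y' (H : disj E X Y) (Hs : disj E Y X)
          (H' : disj E X' Y') (Hs' : disj E Y' X') (f : Hom X X') (g : Hom Y Y'),
      arr (summ P H H' f g) = arr (summ P Hs Hs' g f)) /\
  (forall u X Y (H : disj E X Y) (Hu : disj E (act E u X) (act E u Y)),
      act E u (sumo P H) = sumo P Hu) /\
  (forall u X Y (H : disj E X Y) (Hu : disj E (act E u X) (act E u Y)),
      arr (circ E u (sumo P H)) = arr (summ P H Hu (circ E u X) (circ E u Y))).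

Record Parsummable := {
  PCat : Cat;
  PEM : EMdata PCat;
  PPS : PSdata PEM;
  P_ax : is_parsummable PPS
}.

Record preserves_sums (C D : Parsummable) (F : Functor (PCat C) (PCat D)) : Prop := {
  ps_zero : fob F (zero (PPS C)) = zero (PPS D);
  ps_disj : forall X Y, disj (PEM C) X Y -> disj (PEM D) (fob F X) (fob F Y);
  ps_sumo : forall X Y (H : disj (PEM C) X Y) (HF : disj (PEM D) (fob F X) (fob F Y)),
      fob F (sumo (PPS C) H) = sumo (PPS D) HF;
  ps_summ : forall X X' Y Y' (H : disj (PEM C) X Y) (H' : disj (PEM C) X' Y')
                   (HF : disj (PEM D) (fob F X) (fob F Y))
                   (HF' : disj (PEM D) (fob F X') (fob F Y'))
                   (f : @Hom (PCat C) X X') (g : @Hom (PCat C) Y Y'),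
      arr (fmor F (summ (PPS C) H H' f g))
      = arr (summ (PPS D) HF HF' (fmor F f) (fmor F g))
}.

Arguments ps_disj {C D F} _ {X Y} _.
Arguments ps_sumo {C D F} _ {X Y} _ _.

Section Push.
Variables (C D : Parsummable) (F : Functor (PCat C) (PCat D)).

Definition pushCat : Cat :=
  {| Ob := Ob (PCat C);
     Hom := fun X Y => @Hom (PCat D) (fob F X) (fob F Y);
     idm := fun X => idm (fob F X);
     comp := fun X Y Z g f => comp g f;
     comp_idl := fun X Y f => comp_idl (PCat D) (fob F X) (fob F Y) f;
     comp_idr := fun X Y f => comp_idr (PCat D) (fob F X) (fob F Y) f;
     comp_assoc := fun X Y Z W f g h =>
       comp_assoc (PCat D) (fob F X) (fob F Y) (fob F Z) (fob F W) f g h |}.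

Definition pushEM : EMdata pushCat :=
  {| act := act (PEM C) : Minj -> Ob pushCat -> Ob pushCat;
     circ := fun u X => fmor F (circ (PEM C) u X) |}.

Definition castHom {K : Cat} {A A' B B' : Ob K} (e1 : A = A') (e2 : B = B')
  (f : @Hom K A' B') : @Hom K A B :=
  match eq_sym e1 in _ = A0 return @Hom K A0 B with
  | eq_refl => match eq_sym e2 in _ = B0 return @Hom K A' B0 with
               | eq_refl => f end end.

Variable hF : preserves_sums C D F.

Definition pushPS : PSdata pushEM :=
  @Build_PSdata pushCat pushEM
     (zero (PPS C) : Ob pushCat)
     (fun X Y (H : disj pushEM X Y) => @sumo _ _ (PPS C) X Y H : Ob pushCat)
     (fun X X' Y Y' (H : disj pushEM X Y) (H' : disj pushEM X' Y')
              (f : @Hom pushCat X X') (g : @Hom pushCat Y Y') =>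
       @castHom (PCat D) _ _ _ _ (ps_sumo hF H (ps_disj hF H)) (ps_sumo hF H' (ps_disj hF H'))
               (summ (PPS D) (ps_disj hF H) (ps_disj hF H') f g)).

End Push.

(* Objects of F_* C, with their M-action, supports and sums, are those of C, so every axiom
   about objects is inherited from C.  A morphism of F_* C is a morphism of D between images
   under F, and the sum of morphisms is the sum in D transported along F(X + Y) = F X + F Y;
   comparing morphisms as elements of the total set of arrows makes this transport invisible,
   so every axiom about morphisms is inherited from D.  The structure isomorphisms F(u_o^X)
   satisfy the cocycle and equivariance conditions because F is a functor preserving sums. *)
From Stdlib Require Import ProofIrrelevance.

Section Arrows.
Context {K : Cat}.

Lemma arr_inj {X Y : Ob K} (f g : Hom X Y) : arr f = arr g -> f = g.
Proof. intro e. exact (inj_pair2 _ _ _ _ _ e). Qed.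

Lemma arr_eq_ends {X Y X' Y' : Ob K} (f : Hom X Y) (g : Hom X' Y') :
  arr f = arr g -> X = X' /\ Y = Y'.
Proof. intro e. apply (f_equal (@projT1 _ _)) in e. now injection e. Qed.

Lemma arr_castHom {A A' B B' : Ob K} (e1 : A = A') (e2 : B = B') (f : Hom A' B') :
  arr (castHom e1 e2 f) = arr f.
Proof. now subst. Qed.

Lemma arr_idm_congr {A B : Ob K} : A = B -> arr (idm A) = arr (idm B).
Proof. now intros ->. Qed.

Lemma arr_comp_congr {X Y Z X' Y' Z' : Ob K}
  (f : Hom X Y) (g : Hom Y Z) (f' : Hom X' Y') (g' : Hom Y' Z') :
  arr f = arr f' -> arr g = arr g' -> arr (comp g f) = arr (comp g' f').
Proof.
  intros ef eg.
  destruct (arr_eq_ends _ _ ef) as [-> ->], (arr_eq_ends _ _ eg) as [_ ->].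
  apply arr_inj in ef, eg. now subst.
Qed.

End Arrows.

Lemma arr_fmor_congr {C D : Cat} (F : Functor C D) {X Y X' Y' : Ob C}
  (f : Hom X Y) (g : Hom X' Y') : arr f = arr g -> arr (fmor F f) = arr (fmor F g).
Proof.
  intro e. destruct (arr_eq_ends _ _ e) as [-> ->].
  apply arr_inj in e. now subst.
Qed.

Lemma fmor_iso {C D : Cat} (F : Functor C D) {X Y : Ob C} (f : Hom X Y) :
  is_iso f -> is_iso (fmor F f).
Proof.
  intros (g & gf & fg). exists (fmor F g).
  now rewrite <- !fmor_comp, gf, fg, !fmor_id.
Qed.

Lemma arr_summ_congr {C : Cat} {E : EMdata C} (P : PSdata E) {X X' Y Y' U U' V V' : Ob C}
  (H : disj E X Y) (H' : disj E X' Y') (K : disj E U V) (K' : disj E U' V')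
  (f : Hom X X') (g : Hom Y Y') (f0 : Hom U U') (g0 : Hom V V') :
  arr f = arr f0 -> arr g = arr g0 -> arr (summ P H H' f g) = arr (summ P K K' f0 g0).
Proof.
  intros ef eg.
  destruct (arr_eq_ends _ _ ef) as [-> ->], (arr_eq_ends _ _ eg) as [-> ->].
  apply arr_inj in ef, eg. subst.
  now rewrite (proof_irrelevance _ H K), (proof_irrelevance _ H' K').
Qed.

Section ParsummableAxioms.
Variable P : Parsummable.

Lemma P_EMcat : is_EMcat (PEM P).
Proof. apply (P_ax P). Qed.

Lemma P_tame : tame (PEM P).
Proof. apply (P_ax P). Qed.

Lemma supp_zero n : ~ supp (PEM P) (zero (PPS P)) n.
Proof. destruct (P_ax P) as (_ & _ & ax & _). apply ax. Qed.

Lemma summ_idm X Y (H : disj (PEM P) X Y) :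
  summ (PPS P) H H (idm X) (idm Y) = idm (sumo (PPS P) H).
Proof. now destruct (P_ax P) as (_ & _ & _ & ax & _). Qed.

Lemma summ_comp X X' X'' Y Y' Y''
  (H : disj (PEM P) X Y) (H' : disj (PEM P) X' Y') (H'' : disj (PEM P) X'' Y'')
  (f : Hom X X') (f' : Hom X' X'') (g : Hom Y Y') (g' : Hom Y' Y'') :
  summ (PPS P) H H'' (comp f' f) (comp g' g)
  = comp (summ (PPS P) H' H'' f' g') (summ (PPS P) H H' f g).
Proof. now destruct (P_ax P) as (_ & _ & _ & _ & ax & _). Qed.

Lemma sumo_zeror X (H : disj (PEM P) X (zero (PPS P))) : sumo (PPS P) H = X.
Proof. now destruct (P_ax P) as (_ & _ & _ & _ & _ & ax & _). Qed.

Lemma sumo_zerol X (H : disj (PEM P) (zero (PPS P)) X) : sumo (PPS P) H = X.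
Proof. now destruct (P_ax P) as (_ & _ & _ & _ & _ & _ & ax & _). Qed.

Lemma summ_zeror X X' (H : disj (PEM P) X (zero (PPS P))) (H' : disj (PEM P) X' (zero (PPS P)))
  (f : Hom X X') : arr (summ (PPS P) H H' f (idm (zero (PPS P)))) = arr f.
Proof. now destruct (P_ax P) as (_ & _ & _ & _ & _ & _ & _ & ax & _). Qed.

Lemma summ_zerol X X' (H : disj (PEM P) (zero (PPS P)) X) (H' : disj (PEM P) (zero (PPS P)) X')
  (f : Hom X X') : arr (summ (PPS P) H H' (idm (zero (PPS P))) f) = arr f.
Proof. now destruct (P_ax P) as (_ & _ & _ & _ & _ & _ & _ & _ & ax & _). Qed.

Lemma sumo_assoc X Y Z (Hxy : disj (PEM P) X Y) (Hyz : disj (PEM P) Y Z) (Hxz : disj (PEM P) X Z)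
  (H1 : disj (PEM P) (sumo (PPS P) Hxy) Z) (H2 : disj (PEM P) X (sumo (PPS P) Hyz)) :
  sumo (PPS P) H1 = sumo (PPS P) H2.
Proof.
  destruct (P_ax P) as (_ & _ & _ & _ & _ & _ & _ & _ & _ & ax & _).
  exact (ax _ _ _ _ _ Hxz _ _).
Qed.

Lemma summ_assoc X Y Z X' Y' Z'
  (Hxy : disj (PEM P) X Y) (Hyz : disj (PEM P) Y Z) (Hxz : disj (PEM P) X Z)
  (H1 : disj (PEM P) (sumo (PPS P) Hxy) Z) (H2 : disj (PEM P) X (sumo (PPS P) Hyz))
  (Hxy' : disj (PEM P) X' Y') (Hyz' : disj (PEM P) Y' Z') (Hxz' : disj (PEM P) X' Z')
  (H1' : disj (PEM P) (sumo (PPS P) Hxy') Z') (H2' : disj (PEM P) X' (sumo (PPS P) Hyz'))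
  (f : Hom X X') (g : Hom Y Y') (h : Hom Z Z') :
  arr (summ (PPS P) H1 H1' (summ (PPS P) Hxy Hxy' f g) h)
  = arr (summ (PPS P) H2 H2' f (summ (PPS P) Hyz Hyz' g h)).
Proof.
  destruct (P_ax P) as (_ & _ & _ & _ & _ & _ & _ & _ & _ & _ & ax & _).
  exact (ax _ _ _ _ _ _ _ _ Hxz _ _ _ _ Hxz' _ _ f g h).
Qed.

Lemma sumo_comm X Y (H : disj (PEM P) X Y) (Hs : disj (PEM P) Y X) :
  sumo (PPS P) H = sumo (PPS P) Hs.
Proof. now destruct (P_ax P) as (_ & _ & _ & _ & _ & _ & _ & _ & _ & _ & _ & ax & _). Qed.

Lemma summ_comm X Y X' Y' (H : disj (PEM P) X Y) (Hs : disj (PEM P) Y X)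
  (H' : disj (PEM P) X' Y') (Hs' : disj (PEM P) Y' X') (f : Hom X X') (g : Hom Y Y') :
  arr (summ (PPS P) H H' f g) = arr (summ (PPS P) Hs Hs' g f).
Proof. now destruct (P_ax P) as (_ & _ & _ & _ & _ & _ & _ & _ & _ & _ & _ & _ & ax & _). Qed.

Lemma act_sumo u X Y (H : disj (PEM P) X Y)
  (Hu : disj (PEM P) (act (PEM P) u X) (act (PEM P) u Y)) :
  act (PEM P) u (sumo (PPS P) H) = sumo (PPS P) Hu.
Proof. now destruct (P_ax P) as (_ & _ & _ & _ & _ & _ & _ & _ & _ & _ & _ & _ & _ & ax & _). Qed.

Lemma circ_sumo u X Y (H : disj (PEM P) X Y)
  (Hu : disj (PEM P) (act (PEM P) u X) (act (PEM P) u Y)) :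
  arr (circ (PEM P) u (sumo (PPS P) H))
  = arr (summ (PPS P) H Hu (circ (PEM P) u X) (circ (PEM P) u Y)).
Proof. now destruct (P_ax P) as (_ & _ & _ & _ & _ & _ & _ & _ & _ & _ & _ & _ & _ & _ & ax). Qed.

End ParsummableAxioms.

Section Push.
Variables (C D : Parsummable) (F : Functor (PCat C) (PCat D)).

(* Equality of arrows of F_* C needs equal endpoints in C, not merely equal images under F. *)
Lemma arr_push_eq {X Y X' Y' : Ob (pushCat C D F)}
  (f : @Hom (pushCat C D F) X Y) (g : @Hom (pushCat C D F) X' Y') :
  X = X' -> Y = Y' -> arr (C := PCat D) f = arr (C := PCat D) g ->
  arr (C := pushCat C D F) f = arr (C := pushCat C D F) g.
Proof. intros -> -> e. apply arr_inj in e. now subst. Qed.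

Lemma arr_push_inj {X Y : Ob (pushCat C D F)} (f g : @Hom (pushCat C D F) X Y) :
  arr (C := PCat D) f = arr (C := PCat D) g -> f = g.
Proof. exact (@arr_inj (PCat D) (fob F X) (fob F Y) f g). Qed.

Lemma is_EMcat_push : is_EMcat (pushEM C D F).
Proof.
  destruct (P_EMcat C) as (act_mid & act_mcomp & circ_iso & circ_mcomp).
  split; [exact act_mid|]. split; [exact act_mcomp|]. split.
  - intros u X. exact (fmor_iso F _ (circ_iso u X)).
  - intros u v X. apply arr_push_eq; [reflexivity | apply act_mcomp |].
    simpl. rewrite <- fmor_comp. apply arr_fmor_congr, circ_mcomp.
Qed.

Variable hF : preserves_sums C D F.

Lemma arr_summ_push {X X' Y Y' : Ob (PCat C)}
  (H : disj (PEM C) X Y) (H' : disj (PEM C) X' Y')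
  (f : Hom (fob F X) (fob F X')) (g : Hom (fob F Y) (fob F Y')) :
  arr (C := PCat D) (summ (pushPS C D F hF) H H' f g)
  = arr (summ (PPS D) (ps_disj hF H) (ps_disj hF H') f g).
Proof. apply arr_castHom. Qed.

Lemma ps_disj_zeror {X : Ob (PCat C)} :
  disj (PEM C) X (zero (PPS C)) -> disj (PEM D) (fob F X) (zero (PPS D)).
Proof. rewrite <- (ps_zero _ _ _ hF). apply (ps_disj hF). Qed.

Lemma ps_disj_zerol {X : Ob (PCat C)} :
  disj (PEM C) (zero (PPS C)) X -> disj (PEM D) (zero (PPS D)) (fob F X).
Proof. rewrite <- (ps_zero _ _ _ hF). apply (ps_disj hF). Qed.

Lemma ps_disj_sumol {X Y Z : Ob (PCat C)} (H : disj (PEM C) X Y) :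
  disj (PEM C) (sumo (PPS C) H) Z -> disj (PEM D) (sumo (PPS D) (ps_disj hF H)) (fob F Z).
Proof. rewrite <- (ps_sumo hF H). apply (ps_disj hF). Qed.

Lemma ps_disj_sumor {X Y Z : Ob (PCat C)} (H : disj (PEM C) Y Z) :
  disj (PEM C) X (sumo (PPS C) H) -> disj (PEM D) (fob F X) (sumo (PPS D) (ps_disj hF H)).
Proof. rewrite <- (ps_sumo hF H). apply (ps_disj hF). Qed.

Local Notation EFC := (pushEM C D F).
Local Notation PFC := (pushPS C D F hF).

Lemma summ_idm_push X Y (H : disj EFC X Y) :
  summ PFC H H (idm X) (idm Y) = idm (sumo PFC H).
Proof.
  apply arr_push_inj.
  rewrite arr_summ_push, summ_idm.
  exact (arr_idm_congr (eq_sym (ps_sumo hF H _))).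
Qed.

Lemma summ_comp_push X X' X'' Y Y' Y''
  (H : disj EFC X Y) (H' : disj EFC X' Y') (H'' : disj EFC X'' Y'')
  (f : Hom X X') (f' : Hom X' X'') (g : Hom Y Y') (g' : Hom Y' Y'') :
  summ PFC H H'' (comp f' f) (comp g' g) = comp (summ PFC H' H'' f' g') (summ PFC H H' f g).
Proof.
  apply arr_push_inj.
  rewrite arr_summ_push. cbn [pushCat comp].
  rewrite (summ_comp D _ _ _ _ _ _ _ (ps_disj hF H')).
  apply arr_comp_congr; symmetry; apply arr_summ_push.
Qed.

Lemma summ_zeror_push X X' (H : disj EFC X (zero PFC)) (H' : disj EFC X' (zero PFC))
  (f : Hom X X') : arr (summ PFC H H' f (idm (zero PFC))) = arr f.
Proof.
  apply arr_push_eq; [apply sumo_zeror .. |].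
  rewrite arr_summ_push,
    <- (summ_zeror D _ _ (ps_disj_zeror H) (ps_disj_zeror H') (f : Hom (fob F X) (fob F X'))).
  apply arr_summ_congr; [reflexivity | exact (arr_idm_congr (ps_zero _ _ _ hF))].
Qed.

Lemma summ_zerol_push X X' (H : disj EFC (zero PFC) X) (H' : disj EFC (zero PFC) X')
  (f : Hom X X') : arr (summ PFC H H' (idm (zero PFC)) f) = arr f.
Proof.
  apply arr_push_eq; [apply sumo_zerol .. |].
  rewrite arr_summ_push,
    <- (summ_zerol D _ _ (ps_disj_zerol H) (ps_disj_zerol H') (f : Hom (fob F X) (fob F X'))).
  apply arr_summ_congr; [exact (arr_idm_congr (ps_zero _ _ _ hF)) | reflexivity].
Qed.

Lemma summ_assoc_push X Y Z X' Y' Z'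
  (Hxy : disj EFC X Y) (Hyz : disj EFC Y Z) (Hxz : disj EFC X Z)
  (H1 : disj EFC (sumo PFC Hxy) Z) (H2 : disj EFC X (sumo PFC Hyz))
  (Hxy' : disj EFC X' Y') (Hyz' : disj EFC Y' Z') (Hxz' : disj EFC X' Z')
  (H1' : disj EFC (sumo PFC Hxy') Z') (H2' : disj EFC X' (sumo PFC Hyz'))
  (f : Hom X X') (g : Hom Y Y') (h : Hom Z Z') :
  arr (summ PFC H1 H1' (summ PFC Hxy Hxy' f g) h)
  = arr (summ PFC H2 H2' f (summ PFC Hyz Hyz' g h)).
Proof.
  apply arr_push_eq;
    [exact (sumo_assoc C _ _ _ _ _ Hxz _ _) | exact (sumo_assoc C _ _ _ _ _ Hxz' _ _) |].
  rewrite !arr_summ_push.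
  transitivity (arr (summ (PPS D) (ps_disj_sumol Hxy H1) (ps_disj_sumol Hxy' H1')
                       (summ (PPS D) (ps_disj hF Hxy) (ps_disj hF Hxy') f g) h)).
  { apply arr_summ_congr; [apply arr_summ_push | reflexivity]. }
  rewrite (summ_assoc D _ _ _ _ _ _ _ _ (ps_disj hF Hxz) _ (ps_disj_sumor Hyz H2)
             _ _ (ps_disj hF Hxz') _ (ps_disj_sumor Hyz' H2')).
  apply arr_summ_congr; [reflexivity | symmetry; apply arr_summ_push].
Qed.

Lemma summ_comm_push X Y X' Y' (H : disj EFC X Y) (Hs : disj EFC Y X)
  (H' : disj EFC X' Y') (Hs' : disj EFC Y' X') (f : Hom X X') (g : Hom Y Y') :
  arr (summ PFC H H' f g) = arr (summ PFC Hs Hs' g f).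
Proof.
  apply arr_push_eq; [apply sumo_comm .. |].
  rewrite !arr_summ_push. apply summ_comm.
Qed.

Lemma circ_sumo_push u X Y (H : disj EFC X Y) (Hu : disj EFC (act EFC u X) (act EFC u Y)) :
  arr (circ EFC u (sumo PFC H)) = arr (summ PFC H Hu (circ EFC u X) (circ EFC u Y)).
Proof.
  apply arr_push_eq; [reflexivity | apply act_sumo |].
  rewrite arr_summ_push. cbn [pushEM circ].
  rewrite <- (ps_summ _ _ _ hF _ _ _ _ H Hu).
  apply arr_fmor_congr, circ_sumo.
Qed.

End Push.

Theorem lemma3p8 (C D : Parsummable) (F : Functor (PCat C) (PCat D))
  (hF : preserves_sums C D F) :
  is_parsummable (pushPS C D F hF).
Proof.
  split; [exact (is_EMcat_push C D F) |].
  repeat split.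
  - exact (P_tame C).
  - exact (supp_zero C).
  - exact (summ_idm_push C D F hF).
  - exact (summ_comp_push C D F hF).
  - exact (sumo_zeror C).
  - exact (sumo_zerol C).
  - exact (summ_zeror_push C D F hF).
  - exact (summ_zerol_push C D F hF).
  - exact (sumo_assoc C).
  - exact (summ_assoc_push C D F hF).
  - exact (sumo_comm C).
  - exact (summ_comm_push C D F hF).
  - exact (act_sumo C).
  - exact (circ_sumo_push C D F hF).
Qed.
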